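(* Let $R$ be a commutative ring with identity and let $M$ be a non-zero comultiplication $R$-module. A submodule $N$ of $M$ is a large submodule of $M$ if and only if $\mathrm{Soc}(M)\subseteq N$.
   Context: An $R$-module $M$ is a comultiplication module if for every submodule $N$ of $M$ there is an ideal $I$ of $R$ with $N=\mathrm{Ann}_M(I)=\{m\in M: Im=0\}$. A submodule $N$ of $M$ is large (essential) in $M$ if $N\cap L\neq 0$ for every non-zero submodule $L$ of $M$. $\mathrm{Min}(M)$ denotes the set of minimal (i.e. simple) submodules of $M$, and $\mathrm{Soc}(M)$ denotes the sum of all minimal submodules of $M$. *)

From HB Require Import structures.
From mathcomp Require Import all_boot all_order all_algebra.
Set Implicit Arguments. Unset Strict Implicit. Unset Printing Implicit Defensive.
Import GRing.Theory.
Local Open Scope ring_scope.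

Section ModDefs.
Variables (R : comPzRingType) (M : lmodType R).

Definition submodule (N : M -> Prop) : Prop :=
  N 0 /\ (forall x y, N x -> N y -> N (x + y)) /\ (forall (a : R) x, N x -> N (a *: x)).

Definition ideal (I : R -> Prop) : Prop :=
  I 0 /\ (forall a b, I a -> I b -> I (a + b)) /\ (forall r a, I a -> I (r * a)).

Definition AnnM (I : R -> Prop) : M -> Prop :=
  fun m => forall r, I r -> r *: m = 0.

Definition comultiplication_module : Prop :=
  forall N : M -> Prop, submodule N ->
    exists I : R -> Prop, ideal I /\ (forall m, N m <-> AnnM I m).

Definition large (N : M -> Prop) : Prop :=
  submodule N /\
  forall L : M -> Prop, submodule L -> (exists x, L x /\ x <> 0) ->
    exists x, N x /\ L x /\ x <> 0.

Definition minimal_submodule (L : M -> Prop) : Prop :=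
  submodule L /\ (exists x, L x /\ x <> 0) /\
  forall K : M -> Prop, submodule K -> (forall x, K x -> L x) ->
    (forall x, K x -> x = 0) \/ (forall x, L x -> K x).

(* Soc(M): the sum of all minimal submodules, i.e. the smallest submodule
   containing every minimal submodule (equal to 0 if there is none). *)
Definition Soc : M -> Prop :=
  fun m => forall K : M -> Prop, submodule K ->
    (forall L, minimal_submodule L -> forall x, L x -> K x) -> K m.

End ModDefs.

(* A large submodule meets every minimal submodule L nontrivially, so it contains L, hence
   Soc(M).  Conversely, let x <> 0 lie in a submodule L and choose a maximal ideal m
   containing Ann(x).  Comultiplication writes the submodule m x as Ann_M(I); since
   x is not in m x, some r in I has r x <> 0, and m annihilates r x.  So R (r x) is
   simple (it is a quotient of the field R/m), and r x is a nonzero element of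
   Soc(M) inside L, hence of N. *)
From HB Require Import structures.
From mathcomp Require Import all_boot all_order all_algebra.
From mathcomp Require Import boolp classical_sets.
Set Implicit Arguments. Unset Strict Implicit. Unset Printing Implicit Defensive.
Import GRing.Theory.
Local Open Scope classical_set_scope.
Local Open Scope ring_scope.

Section MaximalIdeals.
Variable R : comPzRingType.

Definition maximal_ideal (m : R -> Prop) : Prop :=
  ideal m /\ ~ m 1 /\
  forall J : R -> Prop, ideal J -> ~ J 1 -> (forall a, m a -> J a) ->
    forall a, J a -> m a.

(* The base A is added to every candidate so that the empty chain, whose union is
   set0, is not a special case for Zorn's lemma. *)
Lemma ideal_bigcup_chainU (A : set R) (F : set (set R)) :
  ideal A -> total_on F subset -> (forall Y, F Y -> ideal (Y `|` A)) ->
  ideal ((\bigcup_(Y in F) Y) `|` A).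
Proof.
move=> idA Ftot idF.
pose F0 := F `|` [set set0].
have idF0 Y : F0 Y -> ideal (Y `|` A).
  by case=> [/idF //|->]; rewrite set0U.
have in_F0 z : ((\bigcup_(Y in F) Y) `|` A) z -> exists2 Y, F0 Y & (Y `|` A) z.
  case=> [[Y FY Yz]|Az]; first by exists Y; [left | left].
  by exists set0; [right | right].
have F0tot Y1 Y2 : F0 Y1 -> F0 Y2 -> Y1 `<=` Y2 \/ Y2 `<=` Y1.
  case=> [FY1|->]; last by left.
  case=> [FY2|->]; last by right.
  exact: Ftot.
have from_F0 Y z : F0 Y -> (Y `|` A) z -> ((\bigcup_(Y in F) Y) `|` A) z.
  case=> [FY|->] [Yz|Az]; [by left; exists Y | by right | by [] | by right].
split; first by right; case: idA.
split.
  move=> a b /in_F0 [Ya F0Ya Yaa] /in_F0 [Yb F0Yb Ybb].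
  have [YY [F0YY [Ya_YY Yb_YY]]] :
      exists Y, F0 Y /\ (Y `|` A) a /\ (Y `|` A) b.
    case: (F0tot _ _ F0Ya F0Yb) => sub.
      by exists Yb; split=> //; split=> //; case: Yaa => [/sub|]; [left | right].
    by exists Ya; split=> //; split=> //; case: Ybb => [/sub|]; [left | right].
  by apply: (from_F0 YY) => //; apply: (idF0 _ F0YY).2.1.
move=> r a /in_F0 [Y F0Y Ya].
by apply: (from_F0 Y) => //; apply: (idF0 _ F0Y).2.2.
Qed.

Lemma maximal_ideal_exists (A : R -> Prop) :
  ideal A -> ~ A 1 -> exists m, maximal_ideal m /\ forall a, A a -> m a.
Proof.
move=> idA A1.
pose P X := ideal (X `|` A) /\ ~ (X `|` A) 1.
have [X [[idX X1] Xmax]] : exists X, P X /\ forall B, X `<` B -> ~ P B.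
  apply: Zorn_bigcup => F FP Ftot; split.
    by apply: ideal_bigcup_chainU => // Y /FP [].
  by case=> [[Y /FP [_ Y1] Y1']|//]; apply: Y1; left.
exists (X `|` A); split; last by move=> a Aa; right.
split=> //; split=> // J idJ J1 XJ a Ja.
apply: contrapT => XAa.
have JA : J `|` A = J by apply: setUidl => z Az; apply: XJ; right.
apply: (Xmax J); last by split; rewrite JA.
split=> [z Xz|]; first by apply: XJ; left.
by move=> JX; apply: XAa; left; apply: JX.
Qed.

Lemma maximal_ideal_inv_mod (m : R -> Prop) (s : R) :
  maximal_ideal m -> ~ m s -> exists t, m (1 - t * s).
Proof.
move=> [[m0 [mD mM]] [m1 mmax]] ms.
apply: contrapT => no_inv.
pose J a := exists b t, m b /\ a = b + t * s.
have idJ : ideal J.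
  split; first by exists 0, 0; rewrite mul0r addr0.
  split.
    move=> _ _ [b1 [t1 [mb1 ->]]] [b2 [t2 [mb2 ->]]].
    by exists (b1 + b2), (t1 + t2); rewrite mulrDl addrACA; split; first exact: mD.
  move=> r _ [b [t [mb ->]]].
  by exists (r * b), (r * t); rewrite mulrDr mulrA; split; first exact: mM.
have J1 : ~ J 1.
  by move=> [b [t [mb E]]]; apply: no_inv; exists t; rewrite E addrK.
apply: ms; apply: (mmax J idJ J1).
  by move=> a ma; exists a, 0; rewrite mul0r addr0.
by exists 0, 1; rewrite add0r mul1r.
Qed.

End MaximalIdeals.

Section Modules.
Variables (R : comPzRingType) (M : lmodType R).
Implicit Types (N L : M -> Prop) (I : R -> Prop) (x y : M).

Definition cyclic_submod y : M -> Prop := fun z => exists s, z = s *: y.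

Definition ideal_scale I x : M -> Prop := fun z => exists2 a, I a & z = a *: x.

Lemma submoduleI N L :
  submodule N -> submodule L -> submodule (fun z => N z /\ L z).
Proof.
move=> [N0 [ND NZ]] [L0 [LD LZ]]; split=> //; split.
  by move=> a b [Na La] [Nb Lb]; split; [apply: ND | apply: LD].
by move=> r a [Na La]; split; [apply: NZ | apply: LZ].
Qed.

Lemma submodule_cyclic y : submodule (cyclic_submod y).
Proof.
split; first by exists 0; rewrite scale0r.
split; first by move=> _ _ [s ->] [t ->]; exists (s + t); rewrite scalerDl.
by move=> r _ [s ->]; exists (r * s); rewrite scalerA.
Qed.

Lemma submodule_ideal_scale I x : ideal I -> submodule (ideal_scale I x).
Proof.
move=> [I0 [ID IM]]; split; first by exists 0; rewrite ?scale0r.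
split.
  by move=> _ _ [a Ia ->] [b Ib ->]; exists (a + b); rewrite ?scalerDl //; apply: ID.
by move=> r _ [a Ia ->]; exists (r * a); rewrite ?scalerA //; apply: IM.
Qed.

Lemma ideal_annihilator x : ideal (fun a : R => a *: x = 0).
Proof.
split; first exact: scale0r.
split; first by move=> a b ax bx; rewrite scalerDl ax bx addr0.
by move=> r a ax; rewrite -scalerA ax scaler0.
Qed.

(* R y is a quotient of R/m, which is a field. *)
Lemma minimal_cyclic_submod (m : R -> Prop) y :
  maximal_ideal m -> y <> 0 -> (forall a, m a -> a *: y = 0) ->
  minimal_submodule (cyclic_submod y).
Proof.
move=> mmax ynz my; split; first exact: submodule_cyclic.
split; first by exists y; split=> //; exists 1; rewrite scale1r.
move=> K [_ [_ KZ]] Ky_sub.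
have [[k [Kk knz]]|K0] := pselect (exists k, K k /\ k <> 0); last first.
  by left=> z Kz; apply: contrapT => znz; apply: K0; exists z.
right; have [s ks] := Ky_sub k Kk.
have ms : ~ m s by move=> ms; apply: knz; rewrite ks; apply: my.
have [t mt] := maximal_ideal_inv_mod mmax ms.
have Ky : K y.
  have /eqP := my _ mt; rewrite scalerBl scale1r subr_eq0 => /eqP ->.
  by rewrite -scalerA -ks; apply: KZ.
by move=> _ [s' ->]; apply: KZ.
Qed.

Lemma minimal_sub_Soc L x : minimal_submodule L -> L x -> Soc x.
Proof. by move=> Lmin Lx K _ /(_ L Lmin); apply. Qed.

Lemma large_minimal_sub N L :
  large N -> minimal_submodule L -> forall x, L x -> N x.
Proof.
move=> [HN Nmeet] [HL [Lnz Lmin]] x Lx.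
have [z [Nz [Lz znz]]] := Nmeet L HL Lnz.
have [NL0|LNL] := Lmin _ (submoduleI HN HL) (fun w NLw => NLw.2).
  by case: znz; apply: NL0.
by case: (LNL x Lx).
Qed.

Lemma comultiplication_Soc_multiple x :
  comultiplication_module M -> x <> 0 -> exists r : R, r *: x <> 0 /\ Soc (r *: x).
Proof.
move=> Hco xnz.
have ann1 : ~ 1 *: x = 0 by rewrite scale1r.
have [m [mmax ann_m]] := maximal_ideal_exists (ideal_annihilator x) ann1.
have [[_ [mD _]] [m1 _]] := mmax.
have [I [_ mxI]] := Hco _ (submodule_ideal_scale x mmax.1).
have x_mx : ~ ideal_scale m x x.
  move=> [a ma xE]; apply: m1.
  have /ann_m m1a : (1 - a) *: x = 0 by rewrite scalerBl scale1r -xE subrr.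
  by rewrite -(subrK a 1); apply: mD.
have [r [Ir rxnz]] : exists r, I r /\ r *: x <> 0.
  apply: contrapT => Ir0; apply/x_mx/mxI => r Ir.
  by apply: contrapT => rxnz; apply: Ir0; exists r.
have m_rx a : m a -> a *: (r *: x) = 0.
  move=> ma; have /mxI/(_ r Ir) : ideal_scale m x (a *: x) by exists a.
  by rewrite !scalerA mulrC.
exists r; split=> //.
apply: (minimal_sub_Soc (minimal_cyclic_submod mmax rxnz m_rx)).
by exists 1; rewrite scale1r.
Qed.

End Modules.

Theorem lemma2p2 (R : comPzRingType) (M : lmodType R)
  (HM : exists m : M, m <> 0) (Hco : comultiplication_module M)
  (N : M -> Prop) (HN : submodule N) :
  large N <-> (forall m, Soc m -> N m).
Proof.
split=> [Nlarge m Sm | SocN].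
  by apply: Sm HN _ => L Lmin; apply: large_minimal_sub.
split=> // L [_ [_ LZ]] [x [Lx xnz]].
have [r [rxnz Srx]] := comultiplication_Soc_multiple Hco xnz.
by exists (r *: x); split; [apply: SocN | split; [apply: LZ |]].
Qed.
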